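(* For every integer $n\geq 2$, the set $\bigcup_{|\lambda|<1}\ker(W_n^{*}-\lambda I)$ spans a dense subspace of $H^2$.
   Context: $H^2$ denotes the Hardy space of analytic functions $f(z)=\sum_{k\ge0}\hat f(k)z^k$ on the open unit disk with $\sum_{k}|\hat f(k)|^2<\infty$. For $n\in\mathbb{N}$, $W_n$ is the bounded operator on $H^2$ given by $W_nf(z)=(1+z+\cdots+z^{n-1})f(z^n)$, and $W_n^{*}$ is its adjoint; $I$ is the identity and $\lambda$ ranges over complex numbers. *)

(* H^2 is represented by Taylor-coefficient
   sequences a : nat -> C (f(z) = sum_k a k z^k). *)
From Stdlib Require Import Reals Lra Lia List.
From Coquelicot Require Import Coquelicot.
Open Scope R_scope.

Definition H2 (a : nat -> C) : Prop := ex_series (fun k => (Cmod (a k)) ^ 2).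

Definition inner (a b : nat -> C) : C :=
  (Series (fun k => Re (Cmult (a k) (Cconj (b k)))),
   Series (fun k => Im (Cmult (a k) (Cconj (b k))))).

Definition norm2 (a : nat -> C) : R := Series (fun k => (Cmod (a k)) ^ 2).

(* coefficients of f(z^n) *)
Definition subst_pow (n : nat) (a : nat -> C) (m : nat) : C :=
  if Nat.eqb (m mod n)%nat 0 then a (m / n)%nat else RtoC 0.

(* coefficients of (1 + z + ... + z^(n-1)) * g(z)  (Cauchy product) *)
Definition mul_geom (n : nat) (c : nat -> C) (m : nat) : C :=
  fold_right (fun j acc => if Nat.leb j m then Cplus (c (m - j)%nat) acc else acc)
             (RtoC 0) (seq 0 n).

Definition W (n : nat) (a : nat -> C) : nat -> C := mul_geom n (subst_pow n a).

(* g \in ker (W_n^* - lam I): g in H^2 and W_n^* g = lam g, i.e.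
   <W_n f, g> = <f, lam g> for every f in H^2 (definition of the adjoint). *)
Definition in_ker_adj_sub (n : nat) (lam : C) (g : nat -> C) : Prop :=
  H2 g /\ forall f, H2 f -> inner (W n f) g = inner f (fun k => Cmult lam (g k)).

Definition lincomb (l : list (C * (nat -> C))) (k : nat) : C :=
  fold_right (fun p acc => Cplus (Cmult (fst p) (snd p k)) acc) (RtoC 0) l.

From Stdlib Require Import Reals Lra Lia List FunctionalExtensionality.
From Coquelicot Require Import Coquelicot.
Open Scope R_scope.

(* On Taylor coefficients, [(W_n f)_m = f_(m / n)] and [(W_n^* g)_k = sum_(i < n) g_(n k + i)];
   with [P f (z) = f (z ^ n)] we get [W_n^* P = I] and [W_n^* W_n = n I].
   Let [E] be the closed span of the eigenvectors of [W_n^*] with eigenvalue [0 < r < 1].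
   - If [W_n^* u = 0], the resolvent [G = (I - r P)^(-1) u] satisfies [W_n^* G = r G] and
     [G -> u] as [r -> 0]; hence [ker W_n^*] is contained in [E].
   - The resolvent of [(1 - r) (1 - z)], which lies in [ker W_n^*], tends to [1] as [r -> 1],
     because its distance to [1] is [sqrt ((1 - r) / (1 + r))]; hence [1] is in [E].
   - If [W_n^* g = r g] then [W_n g - (n / r) g] is in [ker W_n^*], so [E] is [W_n]-invariant.
   - [z ^ m - W_n (z ^ (m / n)) / n] is in [ker W_n^*], so by induction on [m] every
     monomial is in [E], and the monomials span a dense subspace of [H^2]. *)

Ltac C_components := apply injective_projections; simpl.

Fixpoint psum (a : nat -> R) (N : nat) : R :=
  match N with O => 0 | S k => psum a k + a k end.

Lemma psum_sum_f_R0 a N : psum a (S N) = sum_f_R0 a N.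
Proof. induction N as [|N IH]; simpl in *; [lra|]. rewrite <- IH. reflexivity. Qed.

Lemma psum_ext a b N : (forall i, (i < N)%nat -> a i = b i) -> psum a N = psum b N.
Proof.
  induction N as [|N IH]; intros H; simpl; [reflexivity|].
  rewrite IH by (intros; apply H; lia). rewrite H by lia. reflexivity.
Qed.

Lemma psum_le a b N : (forall i, (i < N)%nat -> a i <= b i) -> psum a N <= psum b N.
Proof.
  induction N as [|N IH]; intros H; simpl; [lra|].
  specialize (IH (fun i Hi => H i ltac:(lia))). specialize (H N ltac:(lia)). lra.
Qed.

Lemma psum_le_mono a N M : (forall i, 0 <= a i) -> (N <= M)%nat -> psum a N <= psum a M.
Proof. intros Ha HNM. induction HNM as [|M _ IH]; simpl; [lra|]. specialize (Ha M). lra. Qed.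

Lemma psum_lin a b al be N :
  psum (fun k => al * a k + be * b k) N = al * psum a N + be * psum b N.
Proof. induction N as [|N IH]; simpl; [lra|]. rewrite IH. lra. Qed.

Lemma psum_add a p q : psum a (p + q) = psum a p + psum (fun i => a (p + i)%nat) q.
Proof.
  induction q as [|q IH]; simpl; [rewrite Nat.add_0_r; lra|].
  rewrite Nat.add_succ_r. simpl. rewrite IH. lra.
Qed.

Lemma psum_block n a K :
  psum a (n * K) = psum (fun k => psum (fun i => a (n * k + i)%nat) n) K.
Proof.
  induction K as [|K IH]; simpl; [rewrite Nat.mul_0_r; reflexivity|].
  replace (n * S K)%nat with (n * K + n)%nat by lia. rewrite psum_add, IH. reflexivity.
Qed.

Lemma psum_const c N : psum (fun _ => c) N = INR N * c.
Proof. induction N as [|N IH]; [simpl; lra|]. rewrite S_INR. simpl. rewrite IH. lra. Qed.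

Lemma psum_delta a j N : (j < N)%nat ->
  (forall i, (i < N)%nat -> i <> j -> a i = 0) -> psum a N = a j.
Proof.
  intros HjN H. induction N as [|N IH]; simpl; [lia|].
  destruct (Nat.eq_dec j N) as [->|Hne].
  - rewrite (psum_ext _ (fun _ => 0)), psum_const by (intros i Hi; apply H; lia). lra.
  - rewrite IH, (H N); [lra|lia|lia|lia|intros i Hi Hij; apply H; lia].
Qed.

Fixpoint csum (F : nat -> C) (N : nat) : C :=
  match N with O => RtoC 0 | S k => (csum F k + F k)%C end.

Lemma csum_ext F G N : (forall i, (i < N)%nat -> F i = G i) -> csum F N = csum G N.
Proof.
  induction N as [|N IH]; intros H; simpl; [reflexivity|].
  rewrite IH by (intros; apply H; lia). rewrite H by lia. reflexivity.
Qed.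

Lemma csum_const c N : csum (fun _ => c) N = (INR N * c)%C.
Proof.
  induction N as [|N IH]; simpl csum; [C_components; ring|].
  rewrite IH, S_INR. C_components; ring.
Qed.

Lemma csum_delta F j N : (j < N)%nat ->
  (forall i, (i < N)%nat -> i <> j -> F i = RtoC 0) -> csum F N = F j.
Proof.
  intros HjN H. induction N as [|N IH]; simpl; [lia|].
  destruct (Nat.eq_dec j N) as [->|Hne].
  - rewrite (csum_ext _ (fun _ => RtoC 0)), csum_const by (intros i Hi; apply H; lia). ring.
  - rewrite IH, (H N); [ring|lia|lia|lia|intros i Hi Hij; apply H; lia].
Qed.

Lemma csum_plus F G N : csum (fun i => F i + G i)%C N = (csum F N + csum G N)%C.
Proof. induction N as [|N IH]; simpl; [ring|]. rewrite IH. ring. Qed.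

Lemma csum_minus F G N : csum (fun i => F i - G i)%C N = (csum F N - csum G N)%C.
Proof. induction N as [|N IH]; simpl; [ring|]. rewrite IH. ring. Qed.

Lemma csum_scal c F N : csum (fun i => c * F i)%C N = (c * csum F N)%C.
Proof. induction N as [|N IH]; simpl; [ring|]. rewrite IH. ring. Qed.

Lemma csum_conj F N : Cconj (csum F N) = csum (fun i => Cconj (F i)) N.
Proof.
  induction N as [|N IH]; simpl csum; [C_components; ring|].
  rewrite Cplus_conj, IH. reflexivity.
Qed.

Lemma additive_csum (L : C -> R) F N :
  (forall z w, L (z + w)%C = L z + L w) -> L (RtoC 0) = 0 ->
  L (csum F N) = psum (fun i => L (F i)) N.
Proof.
  intros Hadd H0. induction N as [|N IH]; simpl; [exact H0|]. rewrite Hadd, IH. reflexivity.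
Qed.

Lemma series_nonneg_bounded (a : nat -> R) B :
  (forall k, 0 <= a k) -> (forall N, psum a N <= B) -> ex_series a /\ Series a <= B.
Proof.
  intros Ha HB.
  assert (Hgrow : Un_growing (sum_f_R0 a)) by (intro k; simpl; specialize (Ha (S k)); lra).
  assert (Hbound : bound (EUn (sum_f_R0 a))).
  { exists B. intros x [k ->]. rewrite <- psum_sum_f_R0. apply HB. }
  destruct (growing_cv _ Hgrow Hbound) as [l Hl].
  assert (Hs : is_series a l) by (apply is_series_Reals; exact Hl).
  split; [exists l; exact Hs|].
  rewrite (is_series_unique _ _ Hs).
  apply Rnot_lt_le. intros HBl.
  destruct (Hl (l - B)) as [N HN]; [lra|].
  specialize (HN N (le_n _)). unfold R_dist in HN. apply Rabs_def2 in HN.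
  specialize (HB (S N)). rewrite psum_sum_f_R0 in HB. lra.
Qed.

Lemma psum_le_Series (a : nat -> R) N :
  (forall k, 0 <= a k) -> ex_series a -> psum a N <= Series a.
Proof.
  intros Ha Hex. pose proof (Series_correct _ Hex) as Hs. apply is_series_Reals in Hs.
  assert (Hgrow : Un_growing (sum_f_R0 a)) by (intro k; simpl; specialize (Ha (S k)); lra).
  apply (Rle_trans _ (psum a (S N))); [apply psum_le_mono; [exact Ha|lia]|].
  rewrite psum_sum_f_R0. exact (growing_ineq _ _ Hgrow Hs N).
Qed.

Definition sq (a : nat -> C) (k : nat) : R := Cmod (a k) ^ 2.

Lemma sq_ge0 a k : 0 <= sq a k.
Proof. apply pow2_ge_0. Qed.

Lemma H2_bounded a B : (forall N, psum (sq a) N <= B) -> H2 a /\ norm2 a <= B.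
Proof. apply series_nonneg_bounded, sq_ge0. Qed.

Lemma psum_le_norm2 a N : H2 a -> psum (sq a) N <= norm2 a.
Proof. apply psum_le_Series, sq_ge0. Qed.

Lemma norm2_ge0 a : H2 a -> 0 <= norm2 a.
Proof. intros Ha. exact (psum_le_norm2 a 0 Ha). Qed.

Lemma H2_le_combination a b x al be : H2 a -> H2 b -> 0 <= al -> 0 <= be ->
  (forall k, sq x k <= al * sq a k + be * sq b k) ->
  H2 x /\ norm2 x <= al * norm2 a + be * norm2 b.
Proof.
  intros Ha Hb Hal Hbe Hx. apply H2_bounded. intros N.
  eapply Rle_trans; [apply psum_le; intros i _; apply Hx|].
  rewrite psum_lin. pose proof (psum_le_norm2 a N Ha). pose proof (psum_le_norm2 b N Hb). nra.
Qed.

Lemma H2_le_scal a x al : H2 a -> 0 <= al -> (forall k, sq x k <= al * sq a k) ->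
  H2 x /\ norm2 x <= al * norm2 a.
Proof.
  intros Ha Hal Hx. destruct (H2_le_combination a a x al 0 Ha Ha Hal (Rle_refl 0)) as [Hx2 Hn].
  - intros k. specialize (Hx k). lra.
  - split; [exact Hx2|lra].
Qed.

Lemma Cmod_plus_sq_le z w : Cmod (z + w)%C ^ 2 <= 2 * Cmod z ^ 2 + 2 * Cmod w ^ 2.
Proof.
  rewrite !Cmod2_alt, re_plus, im_plus.
  pose proof (pow2_ge_0 (Re z - Re w)). pose proof (pow2_ge_0 (Im z - Im w)). nra.
Qed.

(* Convexity of the square norm: [z + r w = (1 - r) (z / (1 - r)) + r w]. *)
Lemma Cmod_plus_scal_sq_le z w r : 0 <= r < 1 ->
  Cmod (z + r * w)%C ^ 2 <= Cmod z ^ 2 / (1 - r) + r * Cmod w ^ 2.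
Proof.
  intros Hr. rewrite !Cmod2_alt, re_plus, im_plus, re_scal_l, im_scal_l.
  set (z1 := Re z); set (z2 := Im z); set (w1 := Re w); set (w2 := Im w).
  assert (E : (z1 ^ 2 + z2 ^ 2) / (1 - r) + r * (w1 ^ 2 + w2 ^ 2)
              - ((z1 + r * w1) ^ 2 + (z2 + r * w2) ^ 2)
            = r * ((z1 - (1 - r) * w1) ^ 2 + (z2 - (1 - r) * w2) ^ 2) / (1 - r))
    by (field; lra).
  assert (0 <= r * ((z1 - (1 - r) * w1) ^ 2 + (z2 - (1 - r) * w2) ^ 2) / (1 - r)).
  { apply Rmult_le_pos; [|apply Rlt_le, Rinv_0_lt_compat; lra].
    apply Rmult_le_pos; [lra|]. pose proof (pow2_ge_0 (z1 - (1 - r) * w1)).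
    pose proof (pow2_ge_0 (z2 - (1 - r) * w2)). lra. }
  lra.
Qed.

Lemma norm2_plus_le a b x : H2 a -> H2 b -> (forall k, x k = (a k + b k)%C) ->
  H2 x /\ norm2 x <= 2 * norm2 a + 2 * norm2 b.
Proof.
  intros Ha Hb Hx. apply H2_le_combination; try lra; auto.
  intros k. unfold sq. rewrite Hx. apply Cmod_plus_sq_le.
Qed.

Lemma norm2_scal_le a x c : H2 a -> (forall k, x k = (c * a k)%C) ->
  H2 x /\ norm2 x <= Cmod c ^ 2 * norm2 a.
Proof.
  intros Ha Hx. apply H2_le_scal; [exact Ha|apply pow2_ge_0|].
  intros k. unfold sq. rewrite Hx, Cmod_mult. right. ring.
Qed.

Lemma H2_norm2_zero x : (forall k, x k = RtoC 0) -> H2 x /\ norm2 x <= 0.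
Proof.
  intros Hx. apply H2_bounded. intros N.
  rewrite (psum_ext _ (fun _ => 0)), psum_const
    by (intros i _; unfold sq; rewrite Hx, Cmod_0; ring).
  lra.
Qed.

Lemma H2_plus a b : H2 a -> H2 b -> H2 (fun k => a k + b k)%C.
Proof. intros Ha Hb. now apply (norm2_plus_le a b). Qed.

Lemma H2_scal c a : H2 a -> H2 (fun k => c * a k)%C.
Proof. intros Ha. now apply (norm2_scal_le a _ c). Qed.

Lemma H2_minus a b : H2 a -> H2 b -> H2 (fun k => a k - b k)%C.
Proof.
  intros Ha Hb. apply (norm2_plus_le a (fun k => RtoC (-1) * b k)%C); auto using H2_scal.
  intros k. ring.
Qed.

Definition monomial (j m : nat) : C := if (m =? j)%nat then RtoC 1 else RtoC 0.

Definition one_minus_z (m : nat) : C := (monomial 0 m - monomial 1 m)%C.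

Lemma H2_monomial j : H2 (monomial j) /\ norm2 (monomial j) <= 1.
Proof.
  apply H2_bounded. intros N.
  apply (Rle_trans _ (psum (sq (monomial j)) (S (Nat.max N j)))).
  { apply psum_le_mono; [apply sq_ge0|lia]. }
  rewrite (psum_delta _ j); [|lia|].
  - unfold sq, monomial. rewrite Nat.eqb_refl, Cmod_1. lra.
  - intros i _ Hi. unfold sq, monomial. rewrite (proj2 (Nat.eqb_neq i j) Hi), Cmod_0. ring.
Qed.

Lemma H2_lincomb l : (forall p, In p l -> H2 (snd p)) -> H2 (lincomb l).
Proof.
  induction l as [|p l IH]; intros Hl.
  - apply H2_norm2_zero. reflexivity.
  - apply H2_plus; [apply H2_scal, Hl; left; reflexivity|].
    apply IH. intros q Hq. apply Hl. right. exact Hq.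
Qed.

Lemma lincomb_app l1 l2 k : lincomb (l1 ++ l2) k = (lincomb l1 k + lincomb l2 k)%C.
Proof.
  induction l1 as [|p l1 IH]; simpl; [ring|]. unfold lincomb in *. simpl. rewrite IH. ring.
Qed.

Lemma lincomb_map_scal c l k :
  lincomb (map (fun p => ((c * fst p)%C, snd p)) l) k = (c * lincomb l k)%C.
Proof. induction l as [|p l IH]; simpl; [ring|]. unfold lincomb in *. simpl. rewrite IH. ring. Qed.

Definition taylor (f : nat -> C) (N : nat) : list (C * (nat -> C)) :=
  map (fun j => (f j, monomial j)) (seq 0 N).

Lemma lincomb_taylor f N m : lincomb (taylor f N) m = if (m <? N)%nat then f m else RtoC 0.
Proof.
  induction N as [|N IH]; [reflexivity|]. unfold taylor in *.
  rewrite seq_S, map_app, lincomb_app, IH. unfold lincomb. simpl. unfold monomial.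
  destruct (Nat.ltb_spec m N); destruct (Nat.ltb_spec m (S N)); destruct (Nat.eqb_spec m N);
    try lia; subst; ring.
Qed.

Lemma norm2_taylor_tail_lt f eps : H2 f -> 0 < eps ->
  exists N, norm2 (fun m => f m - lincomb (taylor f N) m)%C < eps.
Proof.
  intros Hf Heps. pose proof (Series_correct _ Hf) as Hs. apply is_series_Reals in Hs.
  destruct (Hs (eps / 2)) as [N0 HN0]; [lra|].
  specialize (HN0 N0 (le_n _)). unfold R_dist in HN0. apply Rabs_def2 in HN0.
  exists (S N0). set (N := S N0). set (x := fun m => (f m - lincomb (taylor f N) m)%C).
  assert (Hx : forall m, sq x m = if (m <? N)%nat then 0 else sq f m).
  { intros m. unfold sq, x. rewrite lincomb_taylor.
    destruct (m <? N)%nat; [|f_equal; f_equal; ring].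
    replace (f m - f m)%C with (RtoC 0) by ring. rewrite Cmod_0. ring. }
  assert (Htail : forall M, psum (sq x) M <= norm2 f - psum (sq f) N).
  { intros M. apply (Rle_trans _ (psum (sq x) (N + M))); [apply psum_le_mono; [apply sq_ge0|lia]|].
    rewrite psum_add, (psum_ext (sq x) (fun _ => 0)), psum_const
      by (intros i Hi; rewrite Hx; destruct (Nat.ltb_spec i N); [reflexivity|lia]).
    rewrite (psum_ext _ (fun i => sq f (N + i)%nat))
      by (intros i _; rewrite Hx; destruct (Nat.ltb_spec (N + i) N); [lia|reflexivity]).
    pose proof (psum_le_norm2 f (N + M) Hf) as HfNM. rewrite psum_add in HfNM. lra. }
  destruct (H2_bounded x _ Htail) as [_ Hn].
  unfold N in Hn. rewrite psum_sum_f_R0 in Hn. unfold norm2 at 2, sq in Hn. lra.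
Qed.

Lemma divmod_block n k i : (i < n)%nat -> ((n * k + i) / n = k /\ (n * k + i) mod n = i)%nat.
Proof.
  intros Hi. split.
  - symmetry. apply (Nat.div_unique _ _ _ i); lia.
  - symmetry. apply (Nat.mod_unique _ _ k); lia.
Qed.

Lemma mul_geom_csum n c m :
  mul_geom n c m = csum (fun j => if (j <=? m)%nat then c (m - j)%nat else RtoC 0) n.
Proof.
  unfold mul_geom.
  enough (E : forall z,
      fold_right (fun j acc => if (j <=? m)%nat then (c (m - j)%nat + acc)%C else acc) z (seq 0 n)
      = (csum (fun j => if (j <=? m)%nat then c (m - j)%nat else RtoC 0) n + z)%C)
    by (rewrite E; ring).
  induction n as [|n IH]; intros z; [simpl; ring|].
  rewrite seq_S, fold_right_app. simpl fold_right at 2. rewrite IH. simpl csum.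
  destruct (n <=? m)%nat; ring.
Qed.

Lemma W_coef n y m : (1 <= n)%nat -> W n y m = y (m / n)%nat.
Proof.
  intros Hn. unfold W. rewrite mul_geom_csum.
  pose proof (Nat.div_mod_eq m n) as Hm. pose proof (Nat.mod_upper_bound m n ltac:(lia)) as Hr.
  rewrite (csum_delta _ (m mod n)); [|exact Hr|].
  - rewrite (proj2 (Nat.leb_le _ _)) by lia.
    unfold subst_pow. replace (m - m mod n)%nat with (n * (m / n) + 0)%nat by lia.
    destruct (divmod_block n (m / n) 0 ltac:(lia)) as [-> ->]. reflexivity.
  - intros i Hi Hne. destruct (Nat.leb_spec i m); [|reflexivity].
    unfold subst_pow. destruct (Nat.eqb_spec ((m - i) mod n) 0) as [Hz|]; [|reflexivity].
    exfalso. apply Hne. pose proof (Nat.div_mod_eq (m - i) n).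
    replace m with (n * ((m - i) / n) + i)%nat by lia. symmetry. apply divmod_block, Hi.
Qed.

Lemma subst_pow_block n y k i : (i < n)%nat ->
  subst_pow n y (n * k + i) = if (i =? 0)%nat then y k else RtoC 0.
Proof. intros Hi. unfold subst_pow. destruct (divmod_block n k i Hi) as [-> ->]. reflexivity. Qed.

Lemma W_block n y k i : (i < n)%nat -> W n y (n * k + i) = y k.
Proof. intros Hi. rewrite W_coef by lia. f_equal. apply divmod_block, Hi. Qed.

Lemma subst_pow_monomial n j m : (1 <= n)%nat -> subst_pow n (monomial j) m = monomial (n * j) m.
Proof.
  intros Hn. unfold subst_pow, monomial.
  pose proof (Nat.div_mod_eq m n) as Hm.
  destruct (Nat.eqb_spec (m mod n) 0) as [Hz|Hz].
  - destruct (Nat.eqb_spec (m / n) j); destruct (Nat.eqb_spec m (n * j)); try reflexivity.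
    + exfalso. lia.
    + exfalso. subst m. destruct (divmod_block n j 0 ltac:(lia)) as [Hd _].
      rewrite Nat.add_0_r in Hd. auto.
  - destruct (Nat.eqb_spec m (n * j)) as [->|]; [|reflexivity].
    exfalso. destruct (divmod_block n j 0 ltac:(lia)) as [_ Hd]. rewrite Nat.add_0_r in Hd. auto.
Qed.

Lemma W_lincomb n l : (1 <= n)%nat ->
  W n (lincomb l) = lincomb (map (fun p => (fst p, W n (snd p))) l).
Proof.
  intros Hn. extensionality m. rewrite W_coef by exact Hn.
  induction l as [|p l IH]; [reflexivity|]. unfold lincomb in *. simpl.
  rewrite IH, W_coef by exact Hn. reflexivity.
Qed.

Lemma psum_subst_pow_le n y M : (1 <= n)%nat -> psum (sq (subst_pow n y)) M <= psum (sq y) M.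
Proof.
  intros Hn. apply (Rle_trans _ (psum (sq (subst_pow n y)) (n * M))).
  { apply psum_le_mono; [apply sq_ge0|nia]. }
  rewrite psum_block. right. apply psum_ext. intros k _.
  rewrite (psum_delta _ 0); [|lia|].
  - unfold sq. rewrite subst_pow_block by lia. reflexivity.
  - intros i Hi Hi0. unfold sq. rewrite subst_pow_block, (proj2 (Nat.eqb_neq i 0) Hi0), Cmod_0
      by exact Hi.
    ring.
Qed.

Lemma psum_W_le n y M : (1 <= n)%nat -> psum (sq (W n y)) M <= INR n * psum (sq y) M.
Proof.
  intros Hn. apply (Rle_trans _ (psum (sq (W n y)) (n * M))).
  { apply psum_le_mono; [apply sq_ge0|nia]. }
  rewrite psum_block. right. rewrite <- (Rplus_0_r (INR n * _)), <- (Rmult_0_l (psum (sq y) M)).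
  rewrite <- psum_lin. apply psum_ext. intros k _.
  rewrite (psum_ext _ (fun _ => sq y k)), psum_const
    by (intros i Hi; unfold sq; rewrite W_block; auto).
  ring.
Qed.

Lemma H2_subst_pow n y : (1 <= n)%nat -> H2 y ->
  H2 (subst_pow n y) /\ norm2 (subst_pow n y) <= norm2 y.
Proof.
  intros Hn Hy. apply H2_bounded. intros M.
  eapply Rle_trans; [apply psum_subst_pow_le, Hn|apply psum_le_norm2, Hy].
Qed.

Lemma H2_W n y : (1 <= n)%nat -> H2 y -> H2 (W n y) /\ norm2 (W n y) <= INR n * norm2 y.
Proof.
  intros Hn Hy. apply H2_bounded. intros M.
  eapply Rle_trans; [apply psum_W_le, Hn|].
  apply Rmult_le_compat_l; [apply pos_INR|apply psum_le_norm2, Hy].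
Qed.

Lemma H2_of_subst_pow_contraction n x y al c : (1 <= n)%nat -> H2 y -> 0 <= al -> 0 <= c < 1 ->
  (forall m, sq x m <= al * sq y m + c * sq (subst_pow n x) m) ->
  H2 x /\ norm2 x <= al * norm2 y / (1 - c).
Proof.
  intros Hn Hy Hal Hc Hx. apply H2_bounded. intros M.
  assert (Hle : psum (sq x) M <= al * norm2 y + c * psum (sq x) M).
  { eapply Rle_trans; [apply psum_le; intros i _; apply Hx|]. rewrite psum_lin.
    pose proof (psum_le_norm2 y M Hy). pose proof (psum_subst_pow_le n x M Hn).
    apply Rplus_le_compat; apply Rmult_le_compat_l; lra. }
  apply (Rmult_le_reg_r (1 - c)); [lra|].
  unfold Rdiv. rewrite Rmult_assoc, Rinv_l by lra. lra.
Qed.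

Definition W_adj (n : nat) (g : nat -> C) (k : nat) : C := csum (fun i => g (n * k + i)%nat) n.

Lemma W_adj_plus n a b k : W_adj n (fun m => a m + b m)%C k = (W_adj n a k + W_adj n b k)%C.
Proof. apply csum_plus. Qed.

Lemma W_adj_minus n a b k : W_adj n (fun m => a m - b m)%C k = (W_adj n a k - W_adj n b k)%C.
Proof. apply csum_minus. Qed.

Lemma W_adj_scal n c a k : W_adj n (fun m => c * a m)%C k = (c * W_adj n a k)%C.
Proof. apply csum_scal. Qed.

Lemma W_adj_subst_pow n y k : (1 <= n)%nat -> W_adj n (subst_pow n y) k = y k.
Proof.
  intros Hn. unfold W_adj. rewrite (csum_delta _ 0); [|lia|].
  - rewrite subst_pow_block by lia. reflexivity.
  - intros i Hi Hi0. rewrite subst_pow_block by exact Hi. now rewrite (proj2 (Nat.eqb_neq i 0) Hi0).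
Qed.

Lemma W_adj_W n y k : (1 <= n)%nat -> W_adj n (W n y) k = (INR n * y k)%C.
Proof.
  intros Hn. unfold W_adj. rewrite (csum_ext _ (fun _ => y k)); [apply csum_const|].
  intros i Hi. apply W_block, Hi.
Qed.

Lemma W_adj_monomial n j k : (1 <= n)%nat -> W_adj n (monomial j) k = monomial (j / n) k.
Proof.
  intros Hn. unfold W_adj, monomial at 2.
  pose proof (Nat.div_mod_eq j n) as Hj. pose proof (Nat.mod_upper_bound j n ltac:(lia)) as Hr.
  destruct (Nat.eqb_spec k (j / n)) as [->|Hk].
  - rewrite (csum_delta _ (j mod n)); [|exact Hr|].
    + unfold monomial. rewrite (proj2 (Nat.eqb_eq _ j)) by lia. reflexivity.
    + intros i _ Hi. unfold monomial. rewrite (proj2 (Nat.eqb_neq _ j)) by lia. reflexivity.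
  - rewrite (csum_ext _ (fun _ => RtoC 0)), csum_const; [ring|].
    intros i Hi. unfold monomial. destruct (Nat.eqb_spec (n * k + i) j) as [<-|]; [|reflexivity].
    exfalso. apply Hk. symmetry. apply divmod_block, Hi.
Qed.

Lemma is_series_blocks n a : (1 <= n)%nat -> ex_series a ->
  is_series (fun k => psum (fun i => a (n * k + i)%nat) n) (Series a).
Proof.
  intros Hn Ha. pose proof (Series_correct _ Ha) as Hs. apply is_series_Reals in Hs.
  apply is_series_Reals. intros eps Heps. destruct (Hs eps Heps) as [N HN].
  exists N. intros K HK. rewrite <- psum_sum_f_R0, <- psum_block.
  replace (n * S K)%nat with (S (n * S K - 1)) by nia. rewrite psum_sum_f_R0. apply HN. nia.
Qed.

Lemma im_le_Cmod z : Rabs (Im z) <= Cmod z.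
Proof.
  rewrite <- (Rabs_pos_eq (Cmod z)) by apply Cmod_ge_0. apply Rsqr_le_abs_0.
  rewrite !Rsqr_pow2, Cmod2_alt. pose proof (pow2_ge_0 (Re z)). lra.
Qed.

Lemma Series_W_l n f g (L : C -> R) : (1 <= n)%nat -> H2 f -> H2 g ->
  (forall z w, L (z + w)%C = L z + L w) -> L (RtoC 0) = 0 -> (forall z, Rabs (L z) <= Cmod z) ->
  Series (fun m => L (W n f m * Cconj (g m))%C) = Series (fun k => L (f k * Cconj (W_adj n g k))%C).
Proof.
  intros Hn Hf Hg Hadd H0 Hle.
  assert (Hex : ex_series (fun m => L (W n f m * Cconj (g m))%C)).
  { apply (@ex_series_le R_AbsRing R_CompleteNormedModule _ (fun m => sq (W n f) m + sq g m)).
    - intros m. eapply Rle_trans; [apply Hle|]. unfold sq. rewrite Cmod_mult, Cmod_conj.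
      pose proof (pow2_ge_0 (Cmod (W n f m) - Cmod (g m))). nra.
    - apply (ex_series_plus (sq (W n f)) (sq g)); [apply H2_W|]; assumption. }
  symmetry. apply is_series_unique.
  eapply is_series_ext; [|apply (is_series_blocks n _ Hn Hex)]. intros k.
  cbv beta. rewrite <- (additive_csum L) by assumption. f_equal. unfold W_adj.
  rewrite csum_conj, <- csum_scal. apply csum_ext. intros i Hi.
  rewrite W_block by exact Hi. reflexivity.
Qed.

Lemma inner_W_l n f g : (1 <= n)%nat -> H2 f -> H2 g -> inner (W n f) g = inner f (W_adj n g).
Proof.
  intros Hn Hf Hg. unfold inner.
  f_equal; apply Series_W_l; auto using re_plus, re_le_Cmod, im_plus, im_le_Cmod.
Qed.

Lemma in_ker_adj_sub_of_W_adj n lam g : (1 <= n)%nat -> H2 g ->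
  (forall k, W_adj n g k = (lam * g k)%C) -> in_ker_adj_sub n lam g.
Proof.
  intros Hn Hg Heig. split; [exact Hg|]. intros f Hf.
  rewrite inner_W_l by assumption. f_equal. extensionality k. apply Heig.
Qed.

Lemma mul_div_succ_lt c eps : 0 <= c -> 0 < eps -> c * (eps / (c + 1)) < eps.
Proof. intros Hc Heps. apply (Rmult_lt_reg_r (c + 1)); [lra|]. field_simplify; lra. Qed.

Section Approximation.

Variable n : nat.
Hypothesis Hn : (2 <= n)%nat.

Definition adj_eigvec (g : nat -> C) : Prop :=
  H2 g /\ exists r, 0 < r < 1 /\ forall k, W_adj n g k = (r * g k)%C.

(* The equation [G = s + r P G] with [P = subst_pow n] determines [G m] from
   [G (m / n)] when [m >= 1], and reads [G 0 = s 0 + r G 0] at [0]; fuel [m + 1] suffices. *)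
Fixpoint resolvent_iter (r : R) (s : nat -> C) (fuel m : nat) : C :=
  match fuel with
  | O => RtoC 0
  | S fuel' => if (m =? 0)%nat then (s 0%nat * RtoC (/ (1 - r)))%C
               else (s m + r * subst_pow n (resolvent_iter r s fuel') m)%C
  end.

Definition resolvent (r : R) (s : nat -> C) (m : nat) : C := resolvent_iter r s (S m) m.

Lemma resolvent_iter_stable r s f1 f2 m : (m < f1)%nat -> (m < f2)%nat ->
  resolvent_iter r s f1 m = resolvent_iter r s f2 m.
Proof.
  revert f2 m. induction f1 as [|f1 IH]; intros [|f2] m H1 H2; try lia. simpl.
  destruct (Nat.eqb_spec m 0); [reflexivity|].
  unfold subst_pow. destruct (m mod n =? 0)%nat; [|reflexivity].
  pose proof (Nat.div_lt m n ltac:(lia) ltac:(lia)). rewrite (IH f2) by lia. reflexivity.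
Qed.

Lemma resolvent_eq r s m : r <> 1 -> resolvent r s m = (s m + r * subst_pow n (resolvent r s) m)%C.
Proof.
  intros Hr. destruct m as [|m].
  - unfold subst_pow. rewrite Nat.Div0.mod_0_l, Nat.Div0.div_0_l. simpl.
    C_components; field; lra.
  - change (resolvent r s (S m))
      with (s (S m) + r * subst_pow n (resolvent_iter r s (S m)) (S m))%C.
    unfold subst_pow. destruct (S m mod n =? 0)%nat; [|reflexivity].
    pose proof (Nat.div_lt (S m) n ltac:(lia) ltac:(lia)).
    unfold resolvent. rewrite (resolvent_iter_stable r s (S m) (S (S m / n))) by lia. reflexivity.
Qed.

Lemma H2_resolvent r s : H2 s -> 0 <= r < 1 ->
  H2 (resolvent r s) /\ norm2 (resolvent r s) <= norm2 s / (1 - r) ^ 2.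
Proof.
  intros Hs Hr.
  replace (norm2 s / (1 - r) ^ 2) with (/ (1 - r) * norm2 s / (1 - r)) by (field; lra).
  apply (H2_of_subst_pow_contraction n); [lia|exact Hs|apply Rlt_le, Rinv_0_lt_compat; lra|lra|].
  intros m. unfold sq at 1. rewrite resolvent_eq by lra.
  eapply Rle_trans; [apply Cmod_plus_scal_sq_le, Hr|]. unfold sq. right. field. lra.
Qed.

Lemma resolvent_adj_eigvec r s : H2 s -> 0 < r < 1 ->
  (forall k, W_adj n s k = RtoC 0) -> adj_eigvec (resolvent r s).
Proof.
  intros Hs Hr Hker. split; [apply H2_resolvent; auto; lra|]. exists r. split; [exact Hr|].
  intros k.
  assert (E : resolvent r s = fun m => (s m + r * subst_pow n (resolvent r s) m)%C)
    by (extensionality m; apply resolvent_eq; lra).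
  rewrite E at 1. rewrite W_adj_plus, W_adj_scal, W_adj_subst_pow, Hker by lia. ring.
Qed.

Lemma W_adj_one_minus_z k : W_adj n one_minus_z k = RtoC 0.
Proof.
  unfold one_minus_z. rewrite W_adj_minus, !W_adj_monomial by lia.
  rewrite Nat.Div0.div_0_l, (Nat.div_small 1 n) by lia. ring.
Qed.

(* [x = (1 - r) z + r P x], where [P] fixes [1] and [z], [P x] have disjoint supports,
   so that [|x|^2 <= (1 - r)^2 + r^2 |x|^2]. *)
Lemma norm2_one_sub_resolvent_one_minus_z r : 0 <= r < 1 ->
  norm2 (fun m => monomial 0 m - resolvent r (fun m => RtoC (1 - r) * one_minus_z m) m)%C
  <= (1 - r) / (1 + r).
Proof.
  intros Hr. set (G := resolvent r _). set (x := fun m => (monomial 0 m - G m)%C).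
  assert (Hx : forall m, x m = (RtoC (1 - r) * monomial 1 m + r * subst_pow n x m)%C).
  { intros m.
    assert (HPx : subst_pow n x m = (monomial 0 m - subst_pow n G m)%C).
    { pose proof (subst_pow_monomial n 0 m ltac:(lia)) as HP0. rewrite Nat.mul_0_r in HP0.
      rewrite <- HP0. unfold x, subst_pow. destruct (m mod n =? 0)%nat; [reflexivity|ring]. }
    unfold x at 1, G. rewrite resolvent_eq by lra. fold G. rewrite HPx. unfold one_minus_z.
    C_components; ring. }
  assert (Hsq : forall m, sq x m <= (1 - r) ^ 2 * sq (monomial 1) m + r ^ 2 * sq (subst_pow n x) m).
  { intros m. pose proof (sq_ge0 (monomial 1) m). pose proof (sq_ge0 (subst_pow n x) m).
    pose proof (pow2_ge_0 (1 - r)). unfold sq at 1. rewrite Hx.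
    destruct (Nat.eq_dec m 1) as [->|Hm].
    - unfold subst_pow at 1. rewrite Nat.mod_small by lia. simpl Nat.eqb. cbv iota.
      replace (RtoC (1 - r) * monomial 1 1 + r * RtoC 0)%C with (RtoC (1 - r) * monomial 1 1)%C
        by ring.
      rewrite Cmod_mult, Cmod_R, Rabs_pos_eq by lra. unfold sq in *. nra.
    - unfold monomial at 1. rewrite (proj2 (Nat.eqb_neq m 1) Hm).
      replace (RtoC (1 - r) * RtoC 0 + r * subst_pow n x m)%C with (r * subst_pow n x m)%C by ring.
      rewrite Cmod_mult, Cmod_R, Rabs_pos_eq by lra. unfold sq in *. nra. }
  destruct (H2_monomial 1) as [He1 He1n].
  destruct (H2_of_subst_pow_contraction n x (monomial 1) ((1 - r) ^ 2) (r ^ 2)) as [_ Hxn];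
    [lia|exact He1|nra|nra|exact Hsq|].
  replace ((1 - r) ^ 2 * norm2 (monomial 1) / (1 - r ^ 2))
    with ((1 - r) / (1 + r) * norm2 (monomial 1)) in Hxn by (field; nra).
  assert (Hq : 0 <= (1 - r) / (1 + r)).
  { unfold Rdiv. apply Rmult_le_pos; [lra|apply Rlt_le, Rinv_0_lt_compat; lra]. }
  pose proof (norm2_ge0 _ He1). nra.
Qed.

Definition approximable (x : nat -> C) : Prop :=
  H2 x /\ forall eps, 0 < eps -> exists l : list (C * (nat -> C)),
    (forall p, In p l -> adj_eigvec (snd p)) /\ norm2 (fun k => x k - lincomb l k)%C < eps.

Lemma H2_lincomb_adj_eigvec l : (forall p, In p l -> adj_eigvec (snd p)) -> H2 (lincomb l).
Proof. intros Hl. apply H2_lincomb. intros p Hp. apply Hl, Hp. Qed.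

Lemma approximable_adj_eigvec g : adj_eigvec g -> approximable g.
Proof.
  intros Hg. split; [apply Hg|]. intros eps Heps. exists ((RtoC 1, g) :: nil). split.
  - intros p [<-|[]]. exact Hg.
  - eapply Rle_lt_trans; [|exact Heps]. apply H2_norm2_zero. intros k. unfold lincomb. simpl. ring.
Qed.

Lemma approximable_lim x : H2 x ->
  (forall eps, 0 < eps -> exists y, approximable y /\ norm2 (fun k => x k - y k)%C < eps) ->
  approximable x.
Proof.
  intros Hx Hlim. split; [exact Hx|]. intros eps Heps.
  destruct (Hlim (eps / 4)) as [y [[Hy Happ] Hxy]]; [lra|].
  destruct (Happ (eps / 4)) as [l [Hl Hyl]]; [lra|].
  exists l. split; [exact Hl|].
  destruct (norm2_plus_le (fun k => x k - y k)%C (fun k => y k - lincomb l k)%C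
              (fun k => x k - lincomb l k)%C) as [_ Hnorm].
  - apply H2_minus; assumption.
  - apply H2_minus; [exact Hy|apply H2_lincomb_adj_eigvec, Hl].
  - intros k. ring.
  - lra.
Qed.

Lemma approximable_plus x y : approximable x -> approximable y ->
  approximable (fun k => x k + y k)%C.
Proof.
  intros [Hx Hax] [Hy Hay]. split; [apply H2_plus; assumption|]. intros eps Heps.
  destruct (Hax (eps / 4)) as [l1 [Hl1 Hxl]]; [lra|].
  destruct (Hay (eps / 4)) as [l2 [Hl2 Hyl]]; [lra|].
  exists (l1 ++ l2). split.
  - intros p Hp. apply in_app_or in Hp. destruct Hp; auto.
  - destruct (norm2_plus_le (fun k => x k - lincomb l1 k)%C (fun k => y k - lincomb l2 k)%C
                (fun k => x k + y k - lincomb (l1 ++ l2) k)%C) as [_ Hnorm].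
    + apply H2_minus; [exact Hx|apply H2_lincomb_adj_eigvec, Hl1].
    + apply H2_minus; [exact Hy|apply H2_lincomb_adj_eigvec, Hl2].
    + intros k. rewrite lincomb_app. ring.
    + lra.
Qed.

Lemma approximable_scal c x : approximable x -> approximable (fun k => c * x k)%C.
Proof.
  intros [Hx Hax]. split; [apply H2_scal, Hx|]. intros eps Heps.
  pose proof (pow2_ge_0 (Cmod c)) as Hc.
  destruct (Hax (eps / (Cmod c ^ 2 + 1))) as [l [Hl Hxl]]; [apply Rdiv_lt_0_compat; lra|].
  exists (map (fun p => ((c * fst p)%C, snd p)) l). split.
  - intros p Hp. apply in_map_iff in Hp. destruct Hp as [q [<- Hq]]. exact (Hl q Hq).
  - destruct (norm2_scal_le (fun k => x k - lincomb l k)%C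
                (fun k => c * x k - lincomb (map (fun p => ((c * fst p)%C, snd p)) l) k)%C c)
      as [_ Hnorm].
    + apply H2_minus; [exact Hx|apply H2_lincomb_adj_eigvec, Hl].
    + intros k. rewrite lincomb_map_scal. ring.
    + apply (Rle_lt_trans _ _ _ Hnorm).
      apply (Rle_lt_trans _ (Cmod c ^ 2 * (eps / (Cmod c ^ 2 + 1))));
        [apply Rmult_le_compat_l; lra|].
      apply mul_div_succ_lt; assumption.
Qed.

Lemma approximable_lincomb l : (forall p, In p l -> approximable (snd p)) ->
  approximable (lincomb l).
Proof.
  induction l as [|p l IH]; intros Hl.
  - split; [apply H2_lincomb; intros _ []|]. intros eps Heps. exists nil. split; [intros _ []|].
    eapply Rle_lt_trans; [|exact Heps]. apply H2_norm2_zero. intros k. unfold lincomb. simpl. ring.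
  - apply approximable_plus; [apply approximable_scal, Hl; left; reflexivity|].
    apply IH. intros q Hq. apply Hl. right. exact Hq.
Qed.

Lemma ker_W_adj_approximable u : H2 u -> (forall k, W_adj n u k = RtoC 0) -> approximable u.
Proof.
  intros Hu Hker. apply approximable_lim; [exact Hu|]. intros eps Heps.
  set (N := norm2 u). assert (HN : 0 <= N) by apply norm2_ge0, Hu.
  set (r := Rmin (1 / 2) (eps / (2 * (N + 1)))).
  assert (Hr0 : 0 < r) by (apply Rmin_glb_lt; [lra|apply Rdiv_lt_0_compat; lra]).
  assert (Hr1 : r <= 1 / 2) by apply Rmin_l.
  assert (Hr2 : r <= eps / (2 * (N + 1))) by apply Rmin_r.
  set (G := resolvent r u).
  exists G. split; [apply approximable_adj_eigvec, resolvent_adj_eigvec; auto; lra|].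
  destruct (H2_resolvent r u Hu ltac:(lra)) as [HG HGN]. fold G N in HG, HGN.
  destruct (H2_subst_pow n G ltac:(lia) HG) as [HPG HPGG].
  destruct (norm2_scal_le (subst_pow n G) (fun k => u k - G k)%C (- RtoC r)%C HPG) as [_ Hd].
  { intros k. unfold G. rewrite (resolvent_eq r u k) by lra. ring. }
  rewrite Cmod_opp, Cmod_R, Rabs_pos_eq in Hd by lra.
  assert (HGN' : norm2 G <= 4 * N).
  { eapply Rle_trans; [exact HGN|]. apply (Rmult_le_reg_r ((1 - r) ^ 2)); [nra|].
    unfold Rdiv. rewrite Rmult_assoc, Rinv_l by (apply pow_nonzero; lra).
    assert (1 / 4 <= (1 - r) ^ 2) by nra. nra. }
  assert (Heps' : 2 * r * N < eps).
  { apply (Rle_lt_trans _ (2 * (eps / (2 * (N + 1))) * N)); [nra|].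
    replace (2 * (eps / (2 * (N + 1))) * N) with (N * (eps / (N + 1))) by (field; lra).
    apply mul_div_succ_lt; assumption. }
  nra.
Qed.

Lemma monomial0_approximable : approximable (monomial 0).
Proof.
  apply approximable_lim; [apply H2_monomial|]. intros eps Heps.
  set (r := Rmax (1 / 2) (1 - eps / 2)).
  assert (Hr0 : 1 / 2 <= r) by apply Rmax_l.
  assert (Hr1 : 1 - eps / 2 <= r) by apply Rmax_r.
  assert (Hr2 : r < 1) by (apply Rmax_lub_lt; lra).
  exists (resolvent r (fun m => RtoC (1 - r) * one_minus_z m)%C). split.
  - apply approximable_adj_eigvec, resolvent_adj_eigvec; [|lra|].
    + apply H2_scal, H2_minus; apply H2_monomial.
    + intros k. rewrite W_adj_scal, W_adj_one_minus_z. ring.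
  - eapply Rle_lt_trans; [apply norm2_one_sub_resolvent_one_minus_z; lra|].
    apply (Rmult_lt_reg_r (1 + r)); [lra|]. unfold Rdiv.
    rewrite Rmult_assoc, Rinv_l by lra. nra.
Qed.

Lemma W_adj_eigvec_approximable g : adj_eigvec g -> approximable (W n g).
Proof.
  intros Hg. pose proof Hg as (HgH2 & r & Hr & Heig).
  set (v := fun m => (W n g m - RtoC (INR n / r) * g m)%C).
  assert (Hv : approximable v).
  { apply ker_W_adj_approximable.
    - apply H2_minus; [apply H2_W; [lia|exact HgH2]|apply H2_scal, HgH2].
    - intros k. unfold v. rewrite W_adj_minus, W_adj_scal, W_adj_W, Heig by lia.
      C_components; field; lra. }
  replace (W n g) with (fun m => v m + RtoC (INR n / r) * g m)%C
    by (extensionality m; unfold v; ring).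
  apply approximable_plus; [exact Hv|]. apply approximable_scal, approximable_adj_eigvec, Hg.
Qed.

Lemma W_approximable x : approximable x -> approximable (W n x).
Proof.
  intros [Hx Hax]. apply approximable_lim; [apply H2_W; [lia|exact Hx]|]. intros eps Heps.
  assert (HnR : 0 <= INR n) by apply pos_INR.
  destruct (Hax (eps / (INR n + 1))) as [l [Hl Hxl]]; [apply Rdiv_lt_0_compat; lra|].
  exists (W n (lincomb l)). split.
  - rewrite W_lincomb by lia. apply approximable_lincomb. intros q Hq.
    apply in_map_iff in Hq. destruct Hq as [p [<- Hp]].
    apply W_adj_eigvec_approximable, Hl, Hp.
  - replace (fun k => W n x k - W n (lincomb l) k)%C with (W n (fun k => x k - lincomb l k)%C)
      by (extensionality k; rewrite !W_coef by lia; reflexivity).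
    destruct (H2_W n (fun k => x k - lincomb l k)%C) as [_ HW];
      [lia|apply H2_minus; [exact Hx|apply H2_lincomb_adj_eigvec, Hl]|].
    apply (Rle_lt_trans _ _ _ HW).
    apply (Rle_lt_trans _ (INR n * (eps / (INR n + 1)))); [apply Rmult_le_compat_l; lra|].
    apply mul_div_succ_lt; assumption.
Qed.

Lemma monomial_approximable j : approximable (monomial j).
Proof.
  induction j as [j IH] using (well_founded_induction Wf_nat.lt_wf).
  destruct (Nat.eq_dec j 0) as [->|Hj]; [exact monomial0_approximable|].
  assert (HnR : 0 < INR n) by (apply lt_0_INR; lia).
  set (k := (j / n)%nat).
  set (v := fun m => (monomial j m - RtoC (/ INR n) * W n (monomial k) m)%C).
  assert (Hv : approximable v).
  { apply ker_W_adj_approximable.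
    - apply H2_minus; [apply H2_monomial|apply H2_scal, H2_W; [lia|apply H2_monomial]].
    - intros m. unfold v. rewrite W_adj_minus, W_adj_scal, W_adj_W, W_adj_monomial by lia.
      fold k. C_components; field; lra. }
  replace (monomial j) with (fun m => v m + RtoC (/ INR n) * W n (monomial k) m)%C
    by (extensionality m; unfold v; ring).
  apply approximable_plus; [exact Hv|]. apply approximable_scal, W_approximable.
  apply IH. apply Nat.div_lt; lia.
Qed.

Lemma H2_approximable f : H2 f -> approximable f.
Proof.
  intros Hf. apply approximable_lim; [exact Hf|]. intros eps Heps.
  destruct (norm2_taylor_tail_lt f eps Hf Heps) as [N HN].
  exists (lincomb (taylor f N)). split; [|exact HN].
  apply approximable_lincomb. intros p Hp. apply in_map_iff in Hp. destruct Hp as [j [<- _]].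
  apply monomial_approximable.
Qed.

End Approximation.

Theorem mainTheorem5 (n : nat) (hn : (2 <= n)%nat) :
  forall f : nat -> C, H2 f ->
  forall eps : R, 0 < eps ->
  exists l : list (C * (nat -> C)),
    (forall p, In p l -> exists lam : C, Cmod lam < 1 /\ in_ker_adj_sub n lam (snd p)) /\
    norm2 (fun k => Cminus (f k) (lincomb l k)) < eps.
Proof.
  intros f Hf eps Heps.
  destruct (H2_approximable n hn f Hf) as [_ Happrox].
  destruct (Happrox eps Heps) as [l [Heig Hl]].
  exists l. split; [|exact Hl].
  intros p Hp. destruct (Heig p Hp) as [Hg [r [Hr HW]]].
  exists (RtoC r). split.
  - rewrite Cmod_R, Rabs_pos_eq; lra.
  - apply in_ker_adj_sub_of_W_adj; [lia|exact Hg|exact HW].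
Qed.
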